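(* For any positive integer $n$, there exists a finite graph $G_n$ such that the canonical semi-ring $R(G_n)=\bigoplus_{m=0}^\infty R(G_n, mK_{G_n})$ is not generated in degree at most $n-1$, i.e. it is not generated as a graded semi-ring over ${\mathbb{Z}}^{\mathrm{trop}}$ by elements of $\bigoplus_{m=0}^{n-1}R(G_n,mK_{G_n})$.
   Context: A finite graph $G$ is connected, loops and multiple edges allowed. A divisor is $D=\sum_{x\in V(G)}D(x)[x]$, $D(x)\in{\mathbb{Z}}$; effective if all $D(x)\ge0$. A rational function is $f:V(G)\to{\mathbb{Z}}$; $\mathrm{ord}_x(f)=\sum_{e=\overline{xy}\in E(G)}(f(y)-f(x))$, $\mathrm{div}(f)=\sum_x\mathrm{ord}_x(f)[x]$. $R(G,D)=\{f: D+\mathrm{div}(f)\ge0\}$. $K_G=\sum_x(\mathrm{val}(x)-2)[x]$. The direct sum $\bigoplus_m R(G,mK_G)$ is a graded semi-ring over ${\mathbb{Z}}^{\mathrm{trop}}=({\mathbb{Z}},\max,+)$ with sum $\max$ in each degree, action $c\odot f=c+f$, product $f\odot g=f+g$ (degrees add). A set $S$ of homogeneous elements generates it if every homogeneous element is a finite tropical sum of ${\mathbb{Z}}^{\mathrm{trop}}$-multiples of tropical products of elements of $S$. *)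

From HB Require Import structures.
From mathcomp Require Import all_boot all_order all_algebra.
Set Implicit Arguments. Unset Strict Implicit. Unset Printing Implicit Defensive.
Import Order.TTheory GRing.Theory Num.Theory.
Local Open Scope ring_scope.

(* A finite graph (loops and multiple edges allowed): vertices 'I_nv,
   edges given as a list of (unordered) endpoint pairs; a pair (x,x) is a loop,
   repeated pairs are multiple edges. *)
Record graph := Graph { nv : nat; edges : seq ('I_nv * 'I_nv) }.

Definition vertex (G : graph) := 'I_(nv G).

Definition adj (G : graph) : rel (vertex G) :=
  fun x y => has (fun e : vertex G * vertex G =>
                    ((e.1 == x) && (e.2 == y)) || ((e.2 == x) && (e.1 == y)))
                 (edges G).

Definition connected_graph (G : graph) : Prop :=
  (0 < nv G)%N /\ forall x y : vertex G, connect (@adj G) x y.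

(* valence: loops count twice *)
Definition valence (G : graph) (x : vertex G) : nat :=
  \sum_(e <- edges G) ((e.1 == x) + (e.2 == x))%N.

Definition canonical (G : graph) (x : vertex G) : int :=
  (valence x)%:Z - 2.

Definition ratfun (G : graph) := vertex G -> int.

Definition ord (G : graph) (f : ratfun G) (x : vertex G) : int :=
  \sum_(e <- edges G)
     ((if e.1 == x then f e.2 - f x else 0) + (if e.2 == x then f e.1 - f x else 0)).

Definition in_R (G : graph) (D : vertex G -> int) (f : ratfun G) : Prop :=
  forall x, 0 <= D x + ord f x.

Definition in_RmK (G : graph) (m : nat) (f : ratfun G) : Prop :=
  in_R (fun x => m%:Z * canonical x) f.

(* A set S of homogeneous elements: S m f means (m, f) is in S,
   with f in degree m. *)

(* f (in degree m) is a tropical product of elements of S whose degrees add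
   to m (the empty product is the unit 0 in degree 0). *)
Definition trop_monomial (G : graph) (S : nat -> ratfun G -> Prop)
    (m : nat) (f : ratfun G) : Prop :=
  exists (k : nat) (d : 'I_k -> nat) (g : 'I_k -> ratfun G),
    (forall i, S (d i) (g i)) /\ (\sum_(i < k) d i)%N = m /\
    forall x, f x = \sum_(i < k) g i x.

(* S generates the graded semi-ring: every homogeneous element of degree m
   is a finite (nonempty) tropical sum (pointwise max, written out:
   every term is <= f and at each vertex some term attains f) of Z^trop-multiples
   c (+) h of tropical products h of elements of S of degree m. *)
Definition generates (G : graph) (S : nat -> ratfun G -> Prop) : Prop :=
  forall (m : nat) (f : ratfun G), in_RmK m f ->
    exists (N : nat) (c : 'I_N -> int) (h : 'I_N -> ratfun G),
      (forall j, trop_monomial S m (h j)) /\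
      (forall j x, c j + h j x <= f x) /\
      (forall x, exists j : 'I_N, c j + h j x = f x).

Definition low_degree (G : graph) (n : nat) : nat -> ratfun G -> Prop :=
  fun m f => (m < n)%N /\ in_RmK m f.
Arguments low_degree : clear implicits.

From mathcomp Require Import all_boot all_order all_algebra.
From mathcomp Require Import zify.
Import Order.TTheory GRing.Theory Num.Theory.
Local Open Scope ring_scope.

(* The witness G_n has two vertices joined by 2n parallel edges, so
   K_G = (2n-2)([u] + [v]).  For f in R(G, m K_G) the only constraint is on
   the slope t = f(v) - f(u), namely n|t| <= (n-1)m.  In degree m < n this
   forces (n-1) t <= (n-2) m, a bound that is additive under tropical
   products; but f = (n-1)[v] lies in degree n with slope n-1, and
   (n-1)^2 > (n-2)n.  A tropical sum realising f at v needs a monomial of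
   slope at least n-1, which is impossible. *)

Section Generation.

Context {G : graph} {S : nat -> ratfun G -> Prop}.

Lemma trop_monomial_slope_le {x y : vertex G} {a b : int} {m h} :
  (forall d g, S d g -> a * (g y - g x) <= b * d%:Z) ->
  trop_monomial S m h -> a * (h y - h x) <= b * m%:Z.
Proof.
move=> Sslope [k [d [g [Sg [<- hE]]]]].
rewrite !hE -sumrB mulr_sumr (big_morph Posz PoszD (erefl 0%:Z)) mulr_sumr.
by apply: ler_sum => i _; apply: Sslope.
Qed.

Lemma generates_slope_ge (x y : vertex G) {m f} :
  generates S -> in_RmK m f ->
  exists h, trop_monomial S m h /\ f y - f x <= h y - h x.
Proof.
move=> genS /genS [N [c [h [hS [h_le h_attains]]]]].
have [j cjE] := h_attains y.
exists (h j); split; first exact: hS.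
by have := h_le j x; rewrite -cjE; lia.
Qed.

End Generation.

Definition u0 : 'I_2 := @Ordinal 2 0 isT.
Definition v0 : 'I_2 := @Ordinal 2 1 isT.

Definition banana (k : nat) : graph := @Graph 2 (nseq k (u0, v0)).

Lemma banana_vertexP {k} (x : vertex (banana k)) :
  x = u0 :> vertex (banana k) \/ x = v0 :> vertex (banana k).
Proof. by case: x => [[|[|x]] xlt]; [left; apply: val_inj|right; apply: val_inj|]. Qed.

Lemma banana_connected k : (0 < k)%N -> connected_graph (banana k).
Proof.
case: k => // k _; split=> // x y.
by have [->|->] := banana_vertexP x; have [->|->] := banana_vertexP y;
  rewrite ?connect0 ?connect1.
Qed.

Lemma valence_banana k (x : vertex (banana k)) : valence x = k.
Proof.
rewrite /valence big_nseq.
have -> : ((u0 == x) + (v0 == x) = 1)%N by have [->|->] := banana_vertexP x.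
by rewrite iter_addn_0 mul1n.
Qed.

Lemma ord_banana_u0 k (g : ratfun (banana k)) :
  ord g (u0 : vertex (banana k)) = (g v0 - g u0) *+ k.
Proof. by rewrite /ord big_nseq iter_addr_0 /= addr0. Qed.

Lemma ord_banana_v0 k (g : ratfun (banana k)) :
  ord g (v0 : vertex (banana k)) = (g u0 - g v0) *+ k.
Proof. by rewrite /ord big_nseq iter_addr_0 /= add0r. Qed.

Lemma banana_low_degree_slope n m (g : ratfun (banana (2 * n))) :
  (m < n)%N -> in_RmK m g -> (n%:Z - 1) * (g v0 - g u0) <= (n%:Z - 2) * m%:Z.
Proof.
move=> lt_mn /(_ v0); rewrite ord_banana_v0 /canonical valence_banana.
rewrite -mulr_natr natz => slope_le.
have : n%:Z * (g v0 - g u0) <= m%:Z * (n%:Z - 1) by lia.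
move: (g v0 - g u0) => t {slope_le}.
case: m lt_mn => [|m] lt_mn nt_le; first by nia.
(* integrality: n t <= (m+1)(n-1) < n (m+1) gives t <= m *)
have : t <= m%:Z by nia.
nia.
Qed.

Theorem theorem3p6 (n : nat) : (0 < n)%N ->
  exists G : graph, connected_graph G /\ ~ generates (low_degree G n).
Proof.
move=> n_gt0; exists (banana (2 * n)); split; first by apply: banana_connected; lia.
pose f : ratfun (banana (2 * n)) := fun x => if x == v0 then n%:Z - 1 else 0.
have f_in : in_RmK n f.
  move=> x; rewrite /canonical valence_banana.
  by have [->|->] := banana_vertexP x;
    rewrite ?ord_banana_u0 ?ord_banana_v0 -mulr_natr natz /f /=; nia.
move=> gen; have [h [h_mon h_slope]] :=
  generates_slope_ge (G := banana (2 * n)) u0 v0 gen f_in.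
have low_slope d g : low_degree (banana (2 * n)) n d g ->
    (n%:Z - 1) * (g v0 - g u0) <= (n%:Z - 2) * d%:Z.
  by move=> [lt_dn g_in]; apply: banana_low_degree_slope.
have := trop_monomial_slope_le low_slope h_mon.
have : f v0 - f u0 = n%:Z - 1 by rewrite /f eqxx subr0.
nia.
Qed.
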